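(* Let $n\in\mathbb{N}$. Then $\operatorname{Cong}(\Phi_n(t)) = 1$ if $n$ is square-free, and $\operatorname{Cong}(\Phi_n(t)) = 0$ if $n$ is not square-free. Moreover, $\operatorname{Cong}(\Psi_n(t)) = 0$ if and only if $n$ is composite.
   Context: $\Phi_n(t)$ is the $n$-th cyclotomic polynomial and $\Psi_n(t) := 1+t+\cdots+t^{n-1} = (t^n-1)/(t-1)$. For $r(t)=\sum_ia_it^i\in\mathbb{Z}[t]$ and integers $u>j\ge0$, $r_{u,j}(t):=\sum_{i\equiv j\bmod u}a_it^i$; $\operatorname{Cong}(r(t))$ is the non-negative generator of the ideal $\mathbb{Z}\cap\bigcap_{1<u\le\deg(r(t))+1}\big(r_{u,0}(t)\mathbb{Z}[t]+\cdots+r_{u,u-1}(t)\mathbb{Z}[t]\big)$. *)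

From HB Require Import structures.
From mathcomp Require Import all_boot all_order all_algebra all_field.
Set Implicit Arguments. Unset Strict Implicit. Unset Printing Implicit Defensive.
Import Order.TTheory GRing.Theory Num.Theory.
Local Open Scope ring_scope.

Definition Psi (n : nat) : {poly int} := \sum_(i < n) 'X^i.

Definition rpart (r : {poly int}) (u j : nat) : {poly int} :=
  \poly_(i < size r) (if (i %% u == j)%N then r`_i else 0).

Definition in_part_ideal (r : {poly int}) (u : nat) (m : int) : Prop :=
  exists q : 'I_u -> {poly int}, \sum_(j < u) q j * rpart r u j = m%:P.

(* Cong(r) = c : c >= 0 generates Z ∩ ⋂_{1<u<=deg r + 1} (ideal); note
   deg r + 1 = size r for r <> 0. *)
Definition is_Cong (r : {poly int}) (c : int) : Prop :=
  0 <= c /\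
  forall m : int,
    (forall u : nat, (1 < u)%N -> (u <= size r)%N -> in_part_ideal r u m)
    <-> (c %| m)%Z.

Definition squarefree (n : nat) : Prop :=
  forall p : nat, prime p -> ~~ (p ^ 2 %| n)%N.

Definition composite (n : nat) : Prop := (1 < n)%N /\ ~~ prime n.

From HB Require Import structures.
From mathcomp Require Import all_boot all_order all_algebra all_field.
From mathcomp Require Import ring.
From Stdlib Require Import Classical.
Set Implicit Arguments.
Unset Strict Implicit.
Unset Printing Implicit Defensive.
Import Order.TTheory GRing.Theory Num.Theory.
Local Open Scope ring_scope.

(* If r vanishes on a coset z.mu_u of the u-th roots of unity, then so does
   every residue part r_{u,j}: by discrete Fourier inversion u.r_{u,j}(z) is a
   combination of the values r(w^k z), w a primitive u-th root of unity.
   Evaluating at z then kills the ideal of level u, so Cong(r) = 0; the bound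
   u <= deg r + 1 comes for free from the u distinct roots w^k z. For Phi_n
   with u^2 | n and for Psi_(ab) take z a primitive n-th root and u = p,
   resp. u = a: the points z^(k n/u + 1) are primitive roots since n divides
   (n/u)^2, resp. nontrivial n-th roots of unity since b does not divide k b + 1.
   Conversely the ideal of level u contains c as soon as (G r)_{u,0} = c for
   some G, because (G r)_{u,0} = sum_j G_{u,-j} r_{u,j}. If u does not divide n,
   take G r = t^n - 1. If n is squarefree and u | n, pick a prime q | u; then q
   is prime to n/q and G Phi_n = (t^n - 1)/(t^(n/q) - 1) = sum_(j<q) t^(j n/q)
   has 1 as its only monomial of degree divisible by u. *)

Lemma eqn_modD_subn u i j k : (j <= u)%N ->
  (i + (u - j) == k %[mod u]) = (i == k + j %[mod u]).
Proof. by move=> ju; rewrite -[LHS](eqn_modDr j) -addnA subnK // modnDr. Qed.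

Lemma coef_rpart (r : {poly int}) u j k :
  (rpart r u j)`_k = if (k %% u == j)%N then r`_k else 0.
Proof.
rewrite /rpart coef_poly; case: ltnP => // hk.
by case: ifP => // _; rewrite nth_default.
Qed.

Lemma rpart_mul (G r : {poly int}) u i : (i < u)%N ->
  rpart (G * r) u i = \sum_(j < u) rpart G u ((i + (u - j)) %% u) * rpart r u j.
Proof.
move=> iu; have u0 : (0 < u)%N by apply: leq_ltn_trans iu.
apply/polyP => k; rewrite coef_rpart coef_sum.
under eq_bigr => j _ do rewrite coefM.
rewrite exchange_big /= coefM.
have -> : (if (k %% u == i)%N then \sum_(a < k.+1) G`_a * r`_(k - a) else 0)
    = \sum_(a < k.+1) (if (k %% u == i)%N then G`_a * r`_(k - a) else 0).
  by case: ifP => _ //; rewrite big1.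
apply: eq_bigr => a _.
rewrite (bigD1 (Ordinal (ltn_pmod (k - a) u0))) //= big1 ?addr0; last first.
  move=> j /negbTE hj; rewrite !coef_rpart.
  have -> : ((k - a) %% u == j)%N = false.
    by apply: contraFF hj => /eqP kaj; apply/eqP/val_inj.
  by rewrite mulr0.
rewrite !coef_rpart eqxx; have ak : (a <= k)%N by rewrite -ltnS.
have -> : (a %% u == (i + (u - (k - a) %% u)) %% u)%N = (k %% u == i)%N.
  rewrite eq_sym eqn_modD_subn ?(ltnW (ltn_pmod _ u0)) // modnDmr subnKC //.
  by rewrite (modn_small iu) eq_sym.
by case: ifP; rewrite ?mul0r.
Qed.

Lemma in_part_ideal0 (r : {poly int}) u : in_part_ideal r u 0.
Proof. by exists (fun _ => 0); rewrite big1 // => j _; rewrite mul0r. Qed.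

Lemma in_part_idealMr (r : {poly int}) u c m :
  in_part_ideal r u c -> in_part_ideal r u (c * m).
Proof.
case=> q hq; exists (fun j => q j * m%:P).
under eq_bigr => j _ do rewrite mulrAC.
by rewrite -mulr_suml hq polyCM.
Qed.

Lemma in_part_ideal_rpart0 (G r : {poly int}) u c : (0 < u)%N ->
  rpart (G * r) u 0 = c%:P -> in_part_ideal r u c.
Proof.
by move=> u0 Grc; exists (fun j => rpart G u ((0 + (u - j)) %% u)); rewrite -rpart_mul.
Qed.

Lemma rpart0_Xn_sub1 n u : (0 < n)%N -> ~~ (u %| n)%N ->
  rpart ('X^n - 1) u 0 = (-1)%:P.
Proof.
move=> n0 nun; apply/polyP => k.
rewrite coef_rpart coefB coefXn coef1 coefC.
have [-> | _] := eqVneq k 0%N; first by rewrite mod0n eqxx eq_sym (negbTE (lt0n_neq0 n0)) sub0r.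
have [-> | _] := eqVneq k n; first by move: nun; rewrite /dvdn => /negbTE ->.
by rewrite subr0; case: ifP.
Qed.

Lemma rpart0_sum_Xn q m u : (0 < q)%N -> coprime q m -> (q %| u)%N ->
  rpart (\sum_(j < q) 'X^(j * m)) u 0 = 1.
Proof.
move=> q0 qm qu; apply/polyP => k; rewrite coef_rpart coef_sum coef1.
case: ifPn => [uk | ]; last by case: k => [|k]; rewrite ?mod0n.
rewrite (bigD1 (Ordinal q0)) //= big1 ?addr0; first by rewrite coefXn mul0n.
move=> j j0; rewrite coefXn; case: eqP => // kjm; case/negP: j0; apply/eqP/val_inj => /=.
have : (q %| j * m)%N by rewrite -kjm (dvdn_trans qu uk).
by rewrite Gauss_dvdl // /dvdn (modn_small (ltn_ord j)) => /eqP.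
Qed.

Lemma geom_sum_eq0 (R : idomainType) (x : R) n :
  x ^+ n = 1 -> x != 1 -> \sum_(i < n) x ^+ i = 0.
Proof.
move=> xn1 x1; have /eqP := subrX1 x n; rewrite xn1 subrr eq_sym mulf_eq0.
by rewrite subr_eq0 (negbTE x1) /= => /eqP.
Qed.

Lemma sum_prim_root_expr (R : idomainType) u (w : R) e : u.-primitive_root w ->
  \sum_(k < u) (w ^+ e) ^+ k = if (u %| e)%N then u%:R else 0.
Proof.
move=> pw; case: ifPn => [ue | nue].
  have -> : w ^+ e = 1 by rewrite -(prim_expr_mod pw) (eqP ue) expr0.
  by under eq_bigr do rewrite expr1n; rewrite sumr_const card_ord.
apply: geom_sum_eq0; first by rewrite exprAC (prim_expr_order pw) expr1n.
by rewrite -(expr0 w) (eq_prim_root_expr pw) mod0n.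
Qed.

Section ResiduePartsAtRoots.

Variable R : numDomainType.
Variables (r : {poly int}) (u : nat) (w z : R).
Hypothesis pw : u.-primitive_root w.

Lemma size_map_intr (p : {poly int}) : size (map_poly (intr : int -> R) p) = size p.
Proof. by rewrite size_map_inj_poly //; apply: intr_inj. Qed.

Lemma rpart_fourier j : (j < u)%N ->
  u%:R * (map_poly intr (rpart r u j)).[z] =
  \sum_(k < u) w ^+ (k * (u - j)) * (map_poly intr r).[w ^+ k * z].
Proof.
move=> ju; rewrite (horner_coef_wide (n := size r)); last first.
  by rewrite size_map_intr size_poly.
under [RHS]eq_bigr do rewrite (horner_coef_wide (n := size r)) ?size_map_intr // mulr_sumr.
rewrite exchange_big mulr_sumr; apply: eq_bigr => i _ /=.
rewrite !coef_map /= coef_rpart.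
have uij : (u %| i + (u - j))%N = (i %% u == j)%N.
  by rewrite /dvdn -(mod0n u) eqn_modD_subn ?(ltnW ju) // add0n (modn_small ju).
transitivity ((r`_i)%:~R * z ^+ i * \sum_(k < u) (w ^+ (i + (u - j))) ^+ k).
  rewrite sum_prim_root_expr // uij; case: ifP => _; first by rewrite mulrC.
  by rewrite mulr0 mul0r mulr0.
rewrite mulr_sumr; apply: eq_bigr => k _.
rewrite exprMn -!exprM mulnDl exprD [(i * k)%N]mulnC [((u - j) * k)%N]mulnC.
ring.
Qed.

Hypothesis roots : forall k, (k < u)%N -> root (map_poly intr r) (w ^+ k * z).

Lemma root_rpart j : (j < u)%N -> root (map_poly intr (rpart r u j)) z.
Proof.
move=> ju; have := rpart_fourier ju; rewrite big1 => [/eqP|k _]; last first.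
  by rewrite (rootP (roots (ltn_ord k))) mulr0.
by rewrite mulf_eq0 pnatr_eq0 (gtn_eqF (prim_order_gt0 pw)).
Qed.

Lemma in_part_ideal_roots_eq0 m : in_part_ideal r u m -> m = 0.
Proof.
case=> q /(congr1 (fun p => (map_poly (intr : int -> R) p).[z])) /=.
rewrite rmorph_sum horner_sum big1 => [|j _]; last first.
  by rewrite rmorphM hornerM (rootP (root_rpart (ltn_ord j))) mulr0.
by rewrite map_polyC hornerC /= => /esym/eqP; rewrite intr_eq0 => /eqP.
Qed.

Lemma size_roots_gt : r != 0 -> z != 0 -> (u < size r)%N.
Proof.
move=> r0 z0; rewrite -size_map_intr.
have := max_poly_roots (p := map_poly (intr : int -> R) r)
  (rs := [seq w ^+ k * z | k <- iota 0 u]).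
rewrite size_map size_iota; apply.
- by rewrite map_poly_eq0_id0 ?intr_eq0 ?lead_coef_eq0.
- by apply/allP => x /mapP[k]; rewrite mem_iota => /andP[_ ku] ->; apply: roots.
rewrite map_inj_in_uniq ?iota_uniq // => i k; rewrite !mem_iota => /andP[_ iu] /andP[_ ku].
move/(mulIf z0)/eqP; rewrite (eq_prim_root_expr pw) !modn_small //.
by move/eqP.
Qed.

Lemma is_Cong0_roots : (1 < u)%N -> r != 0 -> z != 0 -> is_Cong r 0.
Proof.
move=> u1 r0 z0; split=> // m; rewrite dvd0z; split=> [inI | /eqP ->].
  by apply/eqP/in_part_ideal_roots_eq0/inI => //; apply/ltnW/size_roots_gt.
by move=> v _ _; apply: in_part_ideal0.
Qed.

End ResiduePartsAtRoots.

Lemma is_Cong1 (r : {poly int}) :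
  (forall u, (1 < u)%N -> (u <= size r)%N -> in_part_ideal r u 1) -> is_Cong r 1.
Proof.
move=> r1; split=> // m; split=> _; first exact: dvd1z.
by move=> u u1 ur; rewrite -[m]mul1r; apply/in_part_idealMr/r1.
Qed.

Lemma is_Cong_uniq (r : {poly int}) c d : is_Cong r c -> is_Cong r d -> c = d.
Proof.
move=> [c0 hc] [d0 hd].
have cd : (c %| d)%Z by apply/(hc d)/(hd d); apply: dvdzz.
have dc : (d %| c)%Z by apply/(hd c)/(hc c); apply: dvdzz.
rewrite -(gez0_abs c0) -(gez0_abs d0); congr Posz.
by apply/eqP; rewrite eqn_dvd; apply/andP.
Qed.

Lemma Psi_geom n : ('X - 1) * Psi n = 'X^n - 1.
Proof. by rewrite /Psi subrX1. Qed.

Lemma Psi_neq0 n : (0 < n)%N -> Psi n != 0.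
Proof.
move=> n0; apply: contraTneq (monic_neq0 (monicXnsubC (1 : int) n0)) => Psi0.
by rewrite polyC1 -Psi_geom Psi0 mulr0 eqxx.
Qed.

Lemma root_Psi (R : idomainType) n (x : R) :
  x ^+ n = 1 -> x != 1 -> root (map_poly intr (Psi n)) x.
Proof.
move=> xn1 x1; rewrite /root /Psi rmorph_sum horner_sum.
by under eq_bigr do rewrite /= map_polyXn hornerXn; rewrite geom_sum_eq0.
Qed.

Lemma Cyclotomic_dvd_Xn_sub1 n : (0 < n)%N ->
  exists G : {poly int}, G * 'Phi_n = 'X^n - 1.
Proof.
move=> n0; have nn : n \in divisors n by rewrite -dvdn_divisors.
exists (\prod_(d <- rem n (divisors n)) 'Phi_d).
by rewrite mulrC -prod_Cyclotomic // [RHS](big_rem n nn).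
Qed.

Lemma Cyclotomic_dvd_sum_Xn n m : (0 < m)%N -> (m %| n)%N -> (m < n)%N ->
  exists G : {poly int}, G * 'Phi_n = \sum_(j < n %/ m) 'X^(j * m).
Proof.
move=> m0 mn ltmn; have n0 : (0 < n)%N := ltn_trans m0 ltmn.
have nn : n \in divisors n by rewrite -dvdn_divisors.
have nm : (n %| m)%N = false.
  by apply: contraTF ltmn => /(dvdn_leq m0); rewrite -leqNgt.
have Xm : \prod_(d <- divisors n | (d %| m)%N) 'Phi_d = 'X^m - 1 :> {poly int}.
  rewrite -prod_Cyclotomic // -big_filter; apply: perm_big.
  apply: uniq_perm; [by rewrite filter_uniq ?divisors_uniq | exact: divisors_uniq |].
  move=> d; rewrite mem_filter -!dvdn_divisors //.
  by case dm: (d %| m)%N => //=; apply: dvdn_trans dm mn.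
have geom : ('X^m - 1) * \sum_(j < n %/ m) 'X^(j * m) = 'X^n - 1 :> {poly int}.
  have -> : 'X^n = ('X^m) ^+ (n %/ m) :> {poly int} by rewrite -exprM mulnC divnK.
  rewrite [RHS]subrX1; congr (_ * _).
  by apply: eq_bigr => j _; rewrite -exprM mulnC.
exists (\prod_(d <- rem n (divisors n) | ~~ (d %| m)%N) 'Phi_d).
have Xm0 : 'X^m - 1 != 0 :> {poly int} by apply: monic_neq0; apply: monicXnsubC.
apply: (mulfI Xm0); rewrite geom -(prod_Cyclotomic n0) [RHS](bigID (fun d => (d %| m)%N)) /=.
by rewrite Xm [in RHS](big_rem n nn) nm /= (mulrC 'Phi_n).
Qed.

Lemma is_Cong_Cyclotomic_squarefree n : (0 < n)%N -> squarefree n -> is_Cong 'Phi_n 1.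
Proof.
move=> n0 sqf; apply: is_Cong1 => u u1 _; have u0 : (0 < u)%N := ltnW u1.
have [un | nun] := boolP (u %| n)%N; last first.
  have [G GPhi] := Cyclotomic_dvd_Xn_sub1 n0.
  have : rpart (G * 'Phi_n) u 0 = (-1)%:P by rewrite GPhi rpart0_Xn_sub1.
  by move/(in_part_ideal_rpart0 u0)/(in_part_idealMr (-1)); rewrite mulrNN mulr1.
set q := pdiv u; have pq : prime q by apply: pdiv_prime.
set m := (n %/ q)%N; have nmq : n = (m * q)%N by rewrite divnK // (dvdn_trans (pdiv_dvd u)).
have m0 : (0 < m)%N by move: n0; rewrite nmq muln_gt0 => /andP[].
have qm : coprime q m.
  rewrite prime_coprime //; apply/negP => qm; case/negP: (sqf q pq).
  by rewrite nmq (expnS q 1) expn1 dvdn_mul.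
have mn : (m %| n)%N by rewrite nmq dvdn_mulr.
have ltmn : (m < n)%N by rewrite nmq -{1}(muln1 m) ltn_pmul2l // prime_gt1.
have [G GPhi] := Cyclotomic_dvd_sum_Xn m0 mn ltmn.
apply: (in_part_ideal_rpart0 (G := G) u0).
have nm_q : (n %/ m = q)%N by rewrite nmq mulKn.
by rewrite GPhi nm_q (rpart0_sum_Xn (prime_gt0 pq) qm (pdiv_dvd u)) polyC1.
Qed.

Lemma is_Cong_Cyclotomic_sq n u : (0 < n)%N -> (1 < u)%N -> (u ^ 2 %| n)%N ->
  is_Cong 'Phi_n 0.
Proof.
move=> n0 u1 u2n; have un : (u %| n)%N by apply: dvdn_trans u2n; rewrite expnS dvdn_mulr.
have [z pz] := C_prim_root_exists n0.
set m := (n %/ u)%N; have nmu : n = (m * u)%N by rewrite divnK.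
have m0 : (0 < m)%N by move: n0; rewrite nmu muln_gt0 => /andP[].
have um : (u %| m)%N by move: u2n; rewrite nmu expnS expn1 dvdn_pmul2r // ltnW.
have n_mm : (n %| m * m)%N by rewrite {1}nmu dvdn_pmul2l.
have z0 : z != 0 by rewrite (prim_root_eq0 pz) -lt0n.
apply: (is_Cong0_roots (dvdn_prim_root pz un) _ u1 (monic_neq0 (Cyclotomic_monic n)) z0).
move=> k _; rewrite -exprM -exprSr (Cintr_Cyclotomic pz) (root_cyclotomic pz).
rewrite prim_root_exp_coprime //; apply: (coprime_dvdr n_mm).
by rewrite coprimeMr andbb coprime_sym /coprime -addn1 mulnC gcdnMDl gcdn1.
Qed.

Lemma is_Cong_Psi_composite a b : (1 < a)%N -> (1 < b)%N -> is_Cong (Psi (a * b)) 0.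
Proof.
move=> a1 b1; have n0 : (0 < a * b)%N by rewrite muln_gt0 (ltnW a1) (ltnW b1).
have [z pz] := C_prim_root_exists n0.
have pw : a.-primitive_root (z ^+ b).
  by have := dvdn_prim_root pz (dvdn_mulr b (dvdnn a)); rewrite (mulKn _ (ltnW a1)).
have z0 : z != 0 by rewrite (prim_root_eq0 pz) -lt0n.
apply: (is_Cong0_roots pw _ a1 (Psi_neq0 n0) z0).
move=> k _; rewrite -exprM -exprSr; apply: root_Psi.
  by rewrite exprAC (prim_expr_order pz) expr1n.
rewrite -(expr0 z) (eq_prim_root_expr pz) mod0n.
apply/negP => /(dvdn_trans (dvdn_mull a (dvdnn b))).
by rewrite -addn1 (dvdn_addr _ (dvdn_mulr k (dvdnn b))) dvdn1 (gtn_eqF b1).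
Qed.

Lemma is_Cong_Psi_indecomposable n : (0 < n)%N ->
  (forall d, (d %| n)%N -> (d == 1)%N || (d == n)) -> is_Cong (Psi n) 1.
Proof.
move=> n0 ndiv; apply: is_Cong1 => u u1 _; have u0 : (0 < u)%N := ltnW u1.
have [un | nun] := boolP (u %| n)%N; last first.
  have : rpart (('X - 1) * Psi n) u 0 = (-1)%:P by rewrite Psi_geom rpart0_Xn_sub1.
  by move/(in_part_ideal_rpart0 u0)/(in_part_idealMr (-1)); rewrite mulrNN mulr1.
have -> : u = n by apply/eqP; move: (ndiv u un); rewrite (gtn_eqF u1).
apply: (in_part_ideal_rpart0 (G := 1) n0).
rewrite mul1r polyC1 -(rpart0_sum_Xn n0 (coprimen1 n) (dvdnn n)).
by congr rpart; apply: eq_bigr => j _; rewrite muln1.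
Qed.

Unset Implicit Arguments.

Theorem proposition4p10 (n : nat) (hn : (0 < n)%N) :
  (squarefree n -> is_Cong 'Phi_n 1) /\
  (~ squarefree n -> is_Cong 'Phi_n 0) /\
  (is_Cong (Psi n) 0 <-> composite n).
Proof.
split; first exact: is_Cong_Cyclotomic_squarefree.
split=> [nsqf | ].
  have [p pp p2n] : exists2 p, prime p & (p ^ 2 %| n)%N.
    by apply: NNPP => nop; apply: nsqf => p pp; apply/negP => p2n; apply: nop; exists p.
  exact: is_Cong_Cyclotomic_sq hn (prime_gt1 pp) p2n.
split=> [Psi0 | [n1 /primePn[|[d /andP[d1 dn] dvd_dn]]]]; last 2 first.
- by rewrite ltnNge n1.
- by rewrite -(divnK dvd_dn); apply: is_Cong_Psi_composite => //; rewrite ltn_divRL // mul1n.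
apply: NNPP => ncomp; suff ndiv : forall d, (d %| n)%N -> (d == 1)%N || (d == n).
  by have /eqP := is_Cong_uniq Psi0 (is_Cong_Psi_indecomposable hn ndiv); rewrite eq_sym oner_eq0.
have [/primeP[_ //] | npn] := boolP (prime n).
have n1 : n = 1%N.
  by apply/eqP; rewrite eqn_leq hn andbT leqNgt; apply/negP => n1; apply: ncomp.
by move=> d; rewrite n1 dvdn1 => ->.
Qed.
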